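(* Let $\phi:\Gamma\to\Gamma'$ be a chromatic morphism between adequate graphs, and assume that $\Gamma'$ is connected. Then $\phi$ is a covering map.
   Context: Fix $r\geq1$ and a type $((p_i,q_i))_{i=1}^r\in(\mathbb{N}^2)^r$. A graph $\Gamma=(V,E)$ consists of sets $V,E$ and maps $s,t:E\to V$ (loops and multiple edges allowed), identified with its topological realization. A morphism of graphs $\Gamma\to\Gamma'$ is a pair of maps $V\to V'$, $E\to E'$ compatible with $s$ and $t$; it is a covering if it is surjective and a local homeomorphism. An adequate graph is a graph with colorings $c:V\to\{1,\dots,r\}$, $c_o,c_i:E\to\mathbb{N}$ such that whenever $c(v)=a$, the edges $e$ with $s(e)=v$ are exactly $p_a$ in number with $\{c_o(e)\}=\{1,\dots,p_a\}$, and the edges $e$ with $t(e)=v$ are exactly $q_a$ in number with $\{c_i(e)\}=\{1,\dots,q_a\}$. A morphism of adequate graphs is chromatic if it preserves $c$, $c_o$ and $c_i$. *)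

From Stdlib Require Import Arith Relations.

Record graph := Graph {
  gV : Type;
  gE : Type;
  gs : gE -> gV;
  gt : gE -> gV
}.

(* A type ((p_i,q_i))_{i=1}^r, given by r and the functions p, q
   (only the values on 1..r matter). *)
Record gtype := GType {
  ty_r : nat;
  ty_p : nat -> nat;
  ty_q : nat -> nat
}.

Record adequate_graph (T : gtype) := AdequateGraph {
  ag : graph;
  col : gV ag -> nat;
  col_o : gE ag -> nat;
  col_i : gE ag -> nat;
  col_range : forall v, 1 <= col v <= ty_r T;
  (* edges out of v: exactly p_{c v} of them, with c_o-values {1,..,p_{c v}} *)
  out_range : forall v e, gs ag e = v -> 1 <= col_o e <= ty_p T (col v);
  out_onto : forall v k, 1 <= k <= ty_p T (col v) ->
               exists e, gs ag e = v /\ col_o e = k;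
  out_inj : forall v e e', gs ag e = v -> gs ag e' = v ->
               col_o e = col_o e' -> e = e';
  (* edges into v: exactly q_{c v} of them, with c_i-values {1,..,q_{c v}} *)
  in_range : forall v e, gt ag e = v -> 1 <= col_i e <= ty_q T (col v);
  in_onto : forall v k, 1 <= k <= ty_q T (col v) ->
               exists e, gt ag e = v /\ col_i e = k;
  in_inj : forall v e e', gt ag e = v -> gt ag e' = v ->
               col_i e = col_i e' -> e = e'
}.
Arguments ag {T}.
Arguments col {T}.
Arguments col_o {T}.
Arguments col_i {T}.

Record graph_morphism (G H : graph) := GraphMorphism {
  mV : gV G -> gV H;
  mE : gE G -> gE H;
  m_s : forall e, gs H (mE e) = mV (gs G e);
  m_t : forall e, gt H (mE e) = mV (gt G e)
}.
Arguments mV {G H}.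
Arguments mE {G H}.

Definition chromatic {T} (G H : adequate_graph T)
    (f : graph_morphism (ag G) (ag H)) : Prop :=
  (forall v, col H (mV f v) = col G v) /\
  (forall e, col_o H (mE f e) = col_o G e) /\
  (forall e, col_i H (mE f e) = col_i G e).

Definition adjacent (G : graph) (v w : gV G) : Prop :=
  exists e, gs G e = v /\ gt G e = w.

(* The topological realization of G is connected iff any two vertices are
   joined by an unoriented edge path. *)
Definition connected (G : graph) : Prop :=
  forall v w : gV G, clos_refl_sym_trans (gV G) (adjacent G) v w.

Definition bijective_between {A B : Type} (PA : A -> Prop) (PB : B -> Prop)
    (f : A -> B) : Prop :=
  (forall a, PA a -> PB (f a)) /\
  (forall a a', PA a -> PA a' -> f a = f a' -> a = a') /\
  (forall b, PB b -> exists a, PA a /\ f a = b).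

(* Covering of graphs: surjective on the realization (i.e. on vertices and
   edges) and a local homeomorphism (i.e. for every vertex v, f induces a
   bijection from the half-edges at v onto the half-edges at f v; since f
   preserves sources and targets, this splits into bijections on outgoing
   and on incoming edges). *)
Definition covering {G H : graph} (f : graph_morphism G H) : Prop :=
  (forall w : gV H, exists v, mV f v = w) /\
  (forall e' : gE H, exists e, mE f e = e') /\
  (forall v : gV G,
     bijective_between (fun e => gs G e = v) (fun e' => gs H e' = mV f v) (mE f) /\
     bijective_between (fun e => gt G e = v) (fun e' => gt H e' = mV f v) (mE f)).

(** Colors determine a morphism locally: the edges leaving (or entering) a vertex
    are indexed bijectively by their colors [1..p] (resp. [1..q]), and a chromatic
    morphism preserves both the vertex color, hence p and q, and the edge colors,
    so it is a bijection on each star.  Star bijectivity lets every edge at an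
    image vertex be lifted, so the image of the vertex map is closed under
    adjacency and, the target being connected, is everything. *)

From Stdlib Require Import Relations.

Section StarBijection.

Variables (VG EG VH EH : Type).
Variables (endG : EG -> VG) (endH : EH -> VH).
Variables (fV : VG -> VH) (fE : EG -> EH).
Variables (labG : EG -> nat) (labH : EH -> nat).
Variables (degG : VG -> nat) (degH : VH -> nat).

Hypothesis f_end : forall e, endH (fE e) = fV (endG e).
Hypothesis f_lab : forall e, labH (fE e) = labG e.
Hypothesis f_deg : forall v, degH (fV v) = degG v.

Hypothesis labH_range : forall w e, endH e = w -> 1 <= labH e <= degH w.
Hypothesis labG_onto : forall v k, 1 <= k <= degG v ->
  exists e, endG e = v /\ labG e = k.
Hypothesis labG_inj : forall v e e', endG e = v -> endG e' = v ->
  labG e = labG e' -> e = e'.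
Hypothesis labH_inj : forall w e e', endH e = w -> endH e' = w ->
  labH e = labH e' -> e = e'.

Lemma star_bijective (v : VG) :
  bijective_between (fun e => endG e = v) (fun e' => endH e' = fV v) fE.
Proof.
  split; [|split].
  - intros e He. rewrite f_end, He. reflexivity.
  - intros e e' He He' Hf. apply (labG_inj v e e' He He').
    rewrite <- (f_lab e), <- (f_lab e'), Hf. reflexivity.
  - intros e' He'.
    assert (Hk : 1 <= labH e' <= degG v).
    { rewrite <- f_deg. exact (labH_range _ e' He'). }
    destruct (labG_onto v (labH e') Hk) as [e [He Hlab]].
    exists e. split; [exact He|].
    apply (labH_inj (fV v)); [rewrite f_end, He; reflexivity | exact He' |].
    rewrite f_lab. exact Hlab.
Qed.

End StarBijection.

Section ChromaticMorphism.

Variables (T : gtype) (G H : adequate_graph T).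
Variable f : graph_morphism (ag G) (ag H).
Hypothesis f_chromatic : chromatic G H f.

Lemma chromatic_out_star_bijective (v : gV (ag G)) :
  bijective_between (fun e => gs (ag G) e = v)
    (fun e' => gs (ag H) e' = mV f v) (mE f).
Proof.
  destruct f_chromatic as [f_col [f_col_o _]].
  apply star_bijective with (labG := col_o G) (labH := col_o H)
    (degG := fun v => ty_p T (col G v)) (degH := fun w => ty_p T (col H w)).
  - exact (m_s _ _ f).
  - exact f_col_o.
  - intro w. rewrite f_col. reflexivity.
  - exact (out_range T H).
  - exact (out_onto T G).
  - exact (out_inj T G).
  - exact (out_inj T H).
Qed.

Lemma chromatic_in_star_bijective (v : gV (ag G)) :
  bijective_between (fun e => gt (ag G) e = v)
    (fun e' => gt (ag H) e' = mV f v) (mE f).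
Proof.
  destruct f_chromatic as [f_col [_ f_col_i]].
  apply star_bijective with (labG := col_i G) (labH := col_i H)
    (degG := fun v => ty_q T (col G v)) (degH := fun w => ty_q T (col H w)).
  - exact (m_t _ _ f).
  - exact f_col_i.
  - intro w. rewrite f_col. reflexivity.
  - exact (in_range T H).
  - exact (in_onto T G).
  - exact (in_inj T G).
  - exact (in_inj T H).
Qed.

Definition in_vertex_image (w : gV (ag H)) : Prop := exists v, mV f v = w.

Lemma in_vertex_image_adjacent (w w' : gV (ag H)) :
  adjacent (ag H) w w' -> in_vertex_image w <-> in_vertex_image w'.
Proof.
  intros [e' [Hs Ht]]. split; intros [v Hv].
  - destruct (chromatic_out_star_bijective v) as [_ [_ lift]].
    destruct (lift e') as [e [_ He]]; [rewrite Hv; exact Hs|].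
    exists (gt (ag G) e). rewrite <- m_t, He. exact Ht.
  - destruct (chromatic_in_star_bijective v) as [_ [_ lift]].
    destruct (lift e') as [e [_ He]]; [rewrite Hv; exact Ht|].
    exists (gs (ag G) e). rewrite <- m_s, He. exact Hs.
Qed.

Lemma in_vertex_image_connected (w w' : gV (ag H)) :
  clos_refl_sym_trans _ (adjacent (ag H)) w w' ->
  in_vertex_image w <-> in_vertex_image w'.
Proof.
  induction 1 as [x y Hxy | | |]; try tauto.
  exact (in_vertex_image_adjacent x y Hxy).
Qed.

Lemma chromatic_vertex_surjective :
  inhabited (gV (ag G)) -> connected (ag H) ->
  forall w, in_vertex_image w.
Proof.
  intros [v0] H_conn w.
  apply (in_vertex_image_connected (mV f v0)); [apply H_conn|].
  exists v0. reflexivity.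
Qed.

Lemma chromatic_edge_surjective :
  (forall w, in_vertex_image w) -> forall e', exists e, mE f e = e'.
Proof.
  intros vsurj e'. destruct (vsurj (gs (ag H) e')) as [v Hv].
  destruct (chromatic_out_star_bijective v) as [_ [_ lift]].
  destruct (lift e') as [e [_ He]]; [symmetry; exact Hv|].
  exists e. exact He.
Qed.

End ChromaticMorphism.

Theorem lemma3p6 (T : gtype) (G H : adequate_graph T)
    (f : graph_morphism (ag G) (ag H)) :
  1 <= ty_r T ->
  inhabited (gV (ag G)) ->
  chromatic G H f ->
  connected (ag H) ->
  covering f.
Proof.
  intros _ G_inhabited f_chromatic H_conn.
  pose proof (chromatic_vertex_surjective T G H f f_chromatic
                G_inhabited H_conn) as vsurj.
  split; [exact vsurj|split].
  - exact (chromatic_edge_surjective T G H f f_chromatic vsurj).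
  - intro v. split.
    + exact (chromatic_out_star_bijective T G H f f_chromatic v).
    + exact (chromatic_in_star_bijective T G H f f_chromatic v).
Qed.
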